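(* Let $\beta_n,\beta_d$ be coprime positive integers with $\beta_n>\beta_d$, put $\beta=\beta_n/\beta_d$, let $\zeta\geq 1$ be an integer and let $\epsilon_s\in(0,1)$. Consider the time-homogeneous Markov chain on the finite state space $\mathcal{S}=\{k/\beta_d : k=0,1,\dots,\beta_n(\zeta+1)\}$ with the following transition probabilities from a state $x\in\mathcal{S}$: (i) if $x\le 1$ (''idle'' state): go to $\beta$ with probability $\epsilon_s$ and to $0$ with probability $1-\epsilon_s$; (ii) if $1<x\le \beta\zeta+1$ (''safe'' state): go to $x+\beta-1$ with probability $\epsilon_s$ and to $x-1$ with probability $1-\epsilon_s$; (iii) if $x>\beta\zeta+1$ (''hazard'' state): go to $x-1$ with probability $1$. Then this Markov chain is irreducible (every state is reachable from every state) and aperiodic.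
   Context: This chain models a two-staged adaptive successive cancellation list decoder: a fast decoder decodes each incoming codeword in time $t_s$ and fails independently with probability $\epsilon_s$; failed codewords are stored in a buffer of capacity $\zeta$ codewords and re-decoded by a slow decoder needing time $\beta t_s$. The state $x=\beta i_\zeta+i_\beta$ is the total remaining time (in units of $t_s$) needed to clear the buffer, where $i_\zeta\in\{0,\dots,\zeta\}$ is the number of buffered codewords and $i_\beta\in\{i/\beta_d: 0\le i\le \beta_n\}$ is the remaining decoding time of the slow decoder; one step of the chain corresponds to time $t_s$. The transition rules above are the paper's definition of the model. *)

From mathcomp Require Import all_boot all_order all_algebra.
Set Implicit Arguments. Unset Strict Implicit. Unset Printing Implicit Defensive.
Import Order.TTheory GRing.Theory Num.Theory.
Local Open Scope ring_scope.

(* State space S = { k / bd : k = 0 .. bn*(zeta+1) }, indexed by k : 'I_(bn*(zeta+1)).+1 *)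
Definition nstates (bn zeta : nat) : nat := (bn * zeta.+1)%N.+1.

Definition state_val (R : realFieldType) (bd : nat) (k : nat) : R := k%:R / bd%:R.

Definition trans (R : realFieldType) (bn bd zeta : nat) (eps : R)
    (i j : 'I_(nstates bn zeta)) : R :=
  let x := @state_val R bd i in
  let y := @state_val R bd j in
  let beta : R := bn%:R / bd%:R in
  if x <= 1 then
    (if y == beta then eps else 0) + (if y == 0 then 1 - eps else 0)
  else if x <= beta * zeta%:R + 1 then
    (if y == x + beta - 1 then eps else 0) + (if y == x - 1 then 1 - eps else 0)
  else
    (if y == x - 1 then 1 else 0).

Definition trans_mx (R : realFieldType) (bn bd zeta : nat) (eps : R)
  : 'M[R]_(nstates bn zeta) := \matrix_(i, j) @trans R bn bd zeta eps i j.

Definition irreducible_mc (R : realFieldType) (n : nat) (P : 'M[R]_n.+1) : Prop :=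
  forall i j : 'I_n.+1, exists m : nat, 0 < (P ^+ m) i j.

(* aperiodic: every state has period 1, i.e. gcd {m >= 1 : P^m i i > 0} = 1,
   expressed as: the only common divisor of all return times is 1. *)
Definition aperiodic_mc (R : realFieldType) (n : nat) (P : 'M[R]_n.+1) : Prop :=
  forall i : 'I_n.+1, forall d : nat,
    (forall m : nat, (0 < m)%N -> 0 < (P ^+ m) i i -> (d %| m)%N) -> d = 1%N.

From mathcomp Require Import all_boot all_order all_algebra.
From mathcomp Require Import zify ring lra.
Set Implicit Arguments. Unset Strict Implicit. Unset Printing Implicit Defensive.
Import Order.TTheory GRing.Theory Num.Theory.
Local Open Scope ring_scope.

(* In the coordinate k = bd * x a step goes down by bd, or, from a safe
   state, up by bn - bd; idle states jump to 0 or to bn.  Every state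
   descends to 0, and 0 jumps to bn.  On the window (bd, bd + bn] the chain
   can follow the rotation r |-> r + (bn - bd) mod bn, which visits the
   whole window because bn - bd is coprime to bn; states below the window
   are reached by descending from it, states above it by climbing.  The
   loop at 0 yields return times m and m + 1 at every state. *)

Section NonnegativeMatrix.

Variables (R : realFieldType) (n : nat) (P : 'M[R]_n.+1).
Hypothesis P_ge0 : forall i j, 0 <= P i j.

Definition reachable (i j : 'I_n.+1) : Prop := exists m, 0 < (P ^+ m) i j.

Lemma mxpow_ge0 m i j : 0 <= (P ^+ m) i j.
Proof.
elim: m i j => [|m IH] i j; first by rewrite expr0 mxE ler0n.
by rewrite exprS mxE; apply: sumr_ge0 => k _; apply: mulr_ge0.
Qed.

Lemma mxpowD_gt0 m1 m2 i k j :
  0 < (P ^+ m1) i k -> 0 < (P ^+ m2) k j -> 0 < (P ^+ (m1 + m2)) i j.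
Proof.
move=> hik hkj; rewrite exprD mxE (bigD1 k) //=.
apply: ltr_pwDl; first exact: mulr_gt0.
by apply: sumr_ge0 => l _; apply: mulr_ge0; apply: mxpow_ge0.
Qed.

Lemma reachable_refl i : reachable i i.
Proof. by exists 0%N; rewrite expr0 mxE eqxx ltr01. Qed.

Lemma reachable_trans i k j : reachable i k -> reachable k j -> reachable i j.
Proof. by move=> [m1 hik] [m2 hkj]; exists (m1 + m2)%N; apply: mxpowD_gt0 hkj. Qed.

Lemma reachable_step i j : 0 < P i j -> reachable i j.
Proof. by exists 1%N; rewrite expr1. Qed.

Lemma aperiodic_of_loop k : irreducible_mc P -> 0 < P k k -> aperiodic_mc P.
Proof.
move=> irrP Pkk i d hd.
have Pkk1 : 0 < (P ^+ 1) k k by rewrite expr1.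
have loop l : 0 < (P ^+ l.+1) k k.
  by elim: l => [//|l IH]; rewrite -[l.+2]add1n; exact: mxpowD_gt0 Pkk1 IH.
have [m1 hik] := irrP i k; have [m2 hki] := irrP k i.
have period l : (d %| m1 + l.+1 + m2)%N.
  by apply: (hd _ _ (mxpowD_gt0 (mxpowD_gt0 hik (loop l)) hki)); lia.
have := period 1%N; rewrite (_ : m1 + 2 + m2 = m1 + 1 + m2 + 1)%N; last by lia.
by rewrite (dvdn_addr _ (period 0%N)) dvdn1 => /eqP.
Qed.

End NonnegativeMatrix.

Lemma coprimeBl m n : (n <= m)%N -> coprime m n -> coprime (m - n) m.
Proof.
move=> le_nm co_mn.
by rewrite /coprime -{2}(subnK le_nm) gcdnDl gcdnC -gcdnDr subnK // gcdnC.
Qed.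

Lemma modn_addM_surj a n r t :
  (0 < n)%N -> coprime a n -> exists k, (r + k * a = t %[mod n])%N.
Proof.
move=> n_gt0 co_an; have [u _] := Bezoutl a n_gt0.
rewrite gcdnC (eqP co_an) => /dvdnP [c ua1].
set s := (r + t * n.-1)%N; exists (u * s)%N; apply/eqP.
rewrite -(eqn_modDr s) (_ : r + u * s * a + s = s * c * n + r)%N; last first.
  by rewrite -[(s * c * n)%N]mulnA -ua1; ring.
rewrite (_ : t + s = t * n + r)%N; last by rewrite /s -{2}(prednK n_gt0); ring.
by rewrite !modnMDl.
Qed.

Lemma state_val_le1 (R : realFieldType) bd k :
  (0 < bd)%N -> (state_val R bd k <= 1) = (k <= bd)%N.
Proof. by move=> bd_gt0; rewrite ler_pdivrMr ?ltr0n // mul1r ler_nat. Qed.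

Lemma state_val_le_safe (R : realFieldType) bn bd zeta k : (0 < bd)%N ->
  (state_val R bd k <= bn%:R / bd%:R * zeta%:R + 1) = (k <= bn * zeta + bd)%N.
Proof.
move=> bd_gt0; have bd_neq0 : bd%:R != 0 :> R by rewrite pnatr_eq0 -lt0n.
have -> : bn%:R / bd%:R * zeta%:R + 1 = state_val R bd (bn * zeta + bd).
  by rewrite /state_val natrD natrM; field.
by rewrite ler_pM2r ?invr_gt0 ?ltr0n ?ler_nat.
Qed.

Lemma state_valD (R : realFieldType) bd m k :
  state_val R bd (m + k) = state_val R bd m + state_val R bd k.
Proof. by rewrite /state_val natrD mulrDl. Qed.

Lemma state_val_subn_bd (R : realFieldType) bd k : (0 < bd)%N -> (bd <= k)%N ->
  state_val R bd (k - bd) = state_val R bd k - 1.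
Proof.
by move=> bd_gt0 le_bd_k; rewrite /state_val natrB // mulrBl divff // pnatr_eq0 -lt0n.
Qed.

Section Chain.

Variables (R : realFieldType) (bn bd zeta : nat) (eps : R).
Hypotheses (bd_gt0 : (0 < bd)%N) (bd_lt_bn : (bd < bn)%N) (zeta_ge1 : (1 <= zeta)%N).
Hypotheses (eps_gt0 : 0 < eps) (eps_lt1 : eps < 1).

Local Notation P := (trans_mx bn bd zeta eps).
Local Notation N := (bn * zeta.+1)%N.
Local Notation st k := (inord k : 'I_(nstates bn zeta)).

Let N_eq : N = (bn * zeta + bn)%N. Proof. exact: mulnSr. Qed.
Let bn_le_bn_zeta : (bn <= bn * zeta)%N. Proof. exact: leq_pmulr. Qed.

Local Ltac size_lia := have := N_eq; have := bn_le_bn_zeta; lia.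
(* [lra] ignores section hypotheses. *)
Local Ltac eps_lra := have := eps_gt0; have := eps_lt1; lra.

Lemma trans_mx_ge0 i j : 0 <= P i j.
Proof. by rewrite mxE /trans; repeat case: ifP => _; eps_lra. Qed.

Lemma trans_mx_idle_beta k : (k <= bd)%N -> 0 < P (st k) (st bn).
Proof.
move=> le_k_bd; rewrite mxE /trans !inordK; try size_lia.
by rewrite state_val_le1 // le_k_bd eqxx; case: ifP => _; eps_lra.
Qed.

Lemma trans_mx_idle_zero k : (k <= bd)%N -> 0 < P (st k) (st 0).
Proof.
move=> le_k_bd; rewrite mxE /trans !inordK; try size_lia.
by rewrite state_val_le1 // le_k_bd /state_val mul0r eqxx; case: ifP => _; eps_lra.
Qed.

Lemma trans_mx_safe_up k : (bd < k <= bn * zeta + bd)%N -> 0 < P (st k) (st (k + bn - bd)).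
Proof.
move=> safe_k; rewrite mxE /trans !inordK; try size_lia.
rewrite state_val_le1 // state_val_le_safe // ifF; last by apply/negbTE; lia.
rewrite ifT; last by lia.
rewrite state_val_subn_bd // ?state_valD ?eqxx; last by lia.
by case: ifP => _; eps_lra.
Qed.

Lemma trans_mx_down k : (bd < k <= N)%N -> 0 < P (st k) (st (k - bd)).
Proof.
move=> hk; rewrite mxE /trans !inordK; try size_lia.
rewrite state_val_le1 // ifF; last by apply/negbTE; lia.
rewrite state_val_subn_bd // ?eqxx; last by lia.
by case: ifP => _; [case: ifP => _|]; eps_lra.
Qed.

Lemma reachable_zero k : (k <= N)%N -> reachable P (st k) (st 0).
Proof.
elim/ltn_ind: k => k IH le_k_N; case: (leqP k bd) => [le_k_bd | lt_bd_k].
  exact/reachable_step/trans_mx_idle_zero.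
apply: (reachable_trans trans_mx_ge0 (reachable_step (trans_mx_down _))); first by rewrite lt_bd_k.
by apply: IH; lia.
Qed.

Lemma trans_mx_window_rotate r :
  (r < bn)%N -> 0 < P (st (bd.+1 + r)) (st (bd.+1 + (r + (bn - bd)) %% bn)).
Proof.
move=> lt_r_bn; case: (ltnP r bd) => [lt_r_bd | le_bd_r].
  rewrite modn_small; last by lia.
  rewrite (_ : bd.+1 + (r + (bn - bd)) = bd.+1 + r + bn - bd)%N; last by lia.
  by apply: trans_mx_safe_up; size_lia.
rewrite (_ : r + (bn - bd) = r - bd + bn)%N ?modnDr ?modn_small; try lia.
rewrite (_ : bd.+1 + (r - bd) = bd.+1 + r - bd)%N; last by lia.
by apply: trans_mx_down; size_lia.
Qed.

Lemma reachable_window r : coprime bn bd -> (r < bn)%N -> reachable P (st bn) (st (bd.+1 + r)).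
Proof.
move=> co_bn_bd lt_r_bn.
have orbit k : reachable P (st bn) (st (bd.+1 + (bn - bd.+1 + k * (bn - bd)) %% bn)).
  elim: k => [|k IH].
    by rewrite mul0n addn0 modn_small ?subnKC //; [apply: reachable_refl | lia].
  apply: (reachable_trans trans_mx_ge0 IH); apply/reachable_step.
  rewrite mulSnr addnA -(modnDml (bn - bd.+1 + k * (bn - bd))).
  by apply/trans_mx_window_rotate/ltn_pmod; lia.
have [k hit] := modn_addM_surj (bn - bd.+1) r (ltn_trans bd_gt0 bd_lt_bn)
  (coprimeBl (ltnW bd_lt_bn) co_bn_bd).
by have := orbit k; rewrite hit modn_small.
Qed.

Lemma reachable_from_zero j : coprime bn bd -> (j <= N)%N -> reachable P (st 0) (st j).
Proof.
move=> co_bn_bd; elim/ltn_ind: j => j IH le_j_N.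
have zero_window r : (r < bn)%N -> reachable P (st 0) (st (bd.+1 + r)).
  move=> lt_r_bn; apply: (reachable_trans trans_mx_ge0 (reachable_step (trans_mx_idle_beta (leq0n _)))).
  exact: reachable_window.
have [-> | j_gt0] := posnP j; first exact: reachable_refl.
case: (leqP j (bd + bn)) => [le_j_window | gt_j_window].
  case: (leqP j bd) => [le_j_bd | lt_bd_j].
    have down := trans_mx_down (k := (j + bd)%N); rewrite addnK in down.
    apply: (reachable_trans trans_mx_ge0 (zero_window j.-1 _)); first by lia.
    rewrite (_ : bd.+1 + j.-1 = j + bd)%N; last by lia.
    by apply/reachable_step/down; size_lia.
  by rewrite -(subnKC lt_bd_j); apply: zero_window; lia.
have up := trans_mx_safe_up (k := (j - (bn - bd))%N).
rewrite (_ : j - (bn - bd) + bn - bd = j)%N in up; last by lia.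
apply: (reachable_trans trans_mx_ge0 (IH (j - (bn - bd))%N _ _)); try lia.
by apply/reachable_step/up; size_lia.
Qed.

Lemma trans_mx_irreducible : coprime bn bd -> irreducible_mc P.
Proof.
move=> co_bn_bd i j.
have le_N (l : 'I_(nstates bn zeta)) : (l <= N)%N by rewrite -ltnS.
rewrite -[i]inord_val -[j]inord_val.
exact: (reachable_trans trans_mx_ge0 (reachable_zero (le_N i)) (reachable_from_zero co_bn_bd (le_N j))).
Qed.

End Chain.

Theorem proposition2 (R : realFieldType) (bn bd zeta : nat) (eps : R)
  (hbd : (0 < bd)%N) (hbnd : (bd < bn)%N) (hcop : coprime bn bd)
  (hzeta : (1 <= zeta)%N) (heps0 : 0 < eps) (heps1 : eps < 1) :
  irreducible_mc (trans_mx bn bd zeta eps) /\ aperiodic_mc (trans_mx bn bd zeta eps).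
Proof.
have irr := trans_mx_irreducible hbd hbnd hzeta heps0 heps1 hcop.
split; first exact: irr.
exact: (aperiodic_of_loop (trans_mx_ge0 bd heps0 heps1) irr
         (trans_mx_idle_zero hbd hbnd hzeta heps0 heps1 (leq0n bd))).
Qed.
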